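(* Let $a<b$, $n\in\mathbb{N}$, $h=\frac{b-a}{n}$ and $x_k=a+k\frac{b-a}{n}$ for $k=0,\dots,n$. Let $f:[a,b]\to\mathbb{R}$ be convex. For $j=1,\dots,n$ and $t\in[0,1]$ define \[ H_j(t)=\frac1h\int_{x_{j-1}}^{x_j} f\left(tu+(1-t)\frac{x_{j-1}+x_j}{2}\right)du, \] \[ F_j(t)=\frac{1}{2h}\int_{x_{j-1}}^{x_j}\left[f\left(\frac{1+t}{2}x_{j-1}+\frac{1-t}{2}u\right)+f\left(\frac{1+t}{2}x_j+\frac{1-t}{2}u\right)\right]du, \] and $H(t)=\sum_{j=1}^n H_j(t)$, $F(t)=\sum_{j=1}^n F_j(t)$ for $t\in[0,1]$. Then: (1) $H$ and $F$ are convex on $[0,1]$; (2) $H$ and $F$ are monotonic nondecreasing on $[0,1]$; (3) $\sup_{t\in[0,1]}H(t)=\frac1h\int_a^b f(u)\,du=H(1)$ and $\inf_{t\in[0,1]}H(t)=\sum_{k=1}^n f\left(\frac{x_{k-1}+x_k}{2}\right)=H(0)$; and $\sup_{t\in[0,1]}F(t)=\frac12\left[f(a)+2\sum_{k=1}^{n-1}f(x_k)+f(b)\right]=F(1)$ and $\inf_{t\in[0,1]}F(t)=\frac1h\int_a^b f(u)\,du=F(0)$. *)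

From Stdlib Require Import Reals Lra.
From Coquelicot Require Import Coquelicot.
Open Scope R_scope.

Definition convex_on (a b : R) (f : R -> R) : Prop :=
  forall x y t, a <= x <= b -> a <= y <= b -> 0 <= t <= 1 ->
    f (t * x + (1 - t) * y) <= t * f x + (1 - t) * f y.

Definition nondecreasing_on (a b : R) (f : R -> R) : Prop :=
  forall s t, a <= s -> s <= t -> t <= b -> f s <= f t.

Definition is_glb (E : R -> Prop) (m : R) : Prop :=
  (forall x, E x -> m <= x) /\ (forall c, (forall x, E x -> c <= x) -> c <= m).

Definition image01 (g : R -> R) : R -> Prop :=
  fun y => exists t, 0 <= t <= 1 /\ y = g t.

Definition node (a b : R) (n k : nat) : R := a + INR k * ((b - a) / INR n).

Definition Hj (f : R -> R) (a b : R) (n j : nat) (t : R) : R :=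
  let h := (b - a) / INR n in
  let xl := node a b n (j - 1) in
  let xr := node a b n j in
  / h * RInt (fun u => f (t * u + (1 - t) * ((xl + xr) / 2))) xl xr.

Definition Fj (f : R -> R) (a b : R) (n j : nat) (t : R) : R :=
  let h := (b - a) / INR n in
  let xl := node a b n (j - 1) in
  let xr := node a b n j in
  / (2 * h) * RInt (fun u => f ((1 + t) / 2 * xl + (1 - t) / 2 * u)
                            + f ((1 + t) / 2 * xr + (1 - t) / 2 * u)) xl xr.

Definition Hsum (f : R -> R) (a b : R) (n : nat) (t : R) : R :=
  sum_n_m (fun j => Hj f a b n j t) 1 n.

Definition Fsum (f : R -> R) (a b : R) (n : nat) (t : R) : R :=
  sum_n_m (fun j => Fj f a b n j t) 1 n.

(* For every t, H_j(t) and F_j(t) average f along points that depend affinely on t, so H and F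
   are convex in t; the formula for F_j even defines a convex function on [-1, 1] with
   F_j(-1) = F_j(0) = (1/h) int f over the cell. Hence the minimum of F on [0, 1] is at 0, and
   so is that of H by the left Hermite-Hadamard inequality; a convex function on [0, 1] with
   its minimum at 0 is nondecreasing, so the extrema are the values at 0 and 1, computed by
   affine substitution and Chasles. Riemann integrability of the convex f comes from its
   continuity on (a, b) and the existence of its one-sided limits at a and b. *)

From Stdlib Require Import Reals Lra Lia Classical.
From Coquelicot Require Import Coquelicot.
Open Scope R_scope.

Lemma convex_on_ext (lo hi : R) (g h : R -> R) :
  (forall t, g t = h t) -> convex_on lo hi g -> convex_on lo hi h.
Proof. intros E Hg s t l Hs Ht Hl. rewrite <- !E. apply Hg; auto. Qed.

Lemma convex_on_sub (lo hi lo' hi' : R) (g : R -> R) :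
  lo <= lo' -> hi' <= hi -> convex_on lo hi g -> convex_on lo' hi' g.
Proof. intros H1 H2 Hg s t l Hs Ht Hl. apply Hg; auto; lra. Qed.

Lemma convex_on_plus (lo hi : R) (g h : R -> R) :
  convex_on lo hi g -> convex_on lo hi h -> convex_on lo hi (fun t => g t + h t).
Proof.
  intros Hg Hh s t l Hs Ht Hl.
  pose proof (Hg s t l Hs Ht Hl). pose proof (Hh s t l Hs Ht Hl). lra.
Qed.

Lemma convex_on_scal (lo hi c : R) (g : R -> R) :
  0 <= c -> convex_on lo hi g -> convex_on lo hi (fun t => c * g t).
Proof.
  intros Hc Hg s t l Hs Ht Hl.
  pose proof (Rmult_le_compat_l c _ _ Hc (Hg s t l Hs Ht Hl)). lra.
Qed.

Lemma convex_on_comp_affine (a b lo hi p q : R) (f : R -> R) :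
  convex_on a b f -> (forall t, lo <= t <= hi -> a <= p * t + q <= b) ->
  convex_on lo hi (fun t => f (p * t + q)).
Proof.
  intros Hf Hpq s t l Hs Ht Hl.
  replace (p * (l * s + (1 - l) * t) + q) with (l * (p * s + q) + (1 - l) * (p * t + q))
    by ring.
  apply Hf; auto.
Qed.

Lemma convex_on_reflect (a b : R) (f : R -> R) :
  convex_on a b f -> convex_on a b (fun x => f (a + b - x)).
Proof.
  intros Hf. apply (convex_on_ext _ _ (fun x => f (-1 * x + (a + b)))).
  - intros x. f_equal. ring.
  - apply (convex_on_comp_affine a b); auto. intros; lra.
Qed.

Lemma convex_combination_between (l x y lo hi : R) :
  0 <= l <= 1 -> lo <= x <= hi -> lo <= y <= hi -> lo <= l * x + (1 - l) * y <= hi.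
Proof. intros. nra. Qed.

Lemma is_glb_exists (E : R -> Prop) :
  (exists x, E x) -> (exists m, forall x, E x -> m <= x) -> exists S, is_glb E S.
Proof.
  intros [x0 Hx0] [m Hm].
  destruct (completeness (fun y => E (- y))) as [M [HM1 HM2]].
  - exists (- m). intros y Hy. pose proof (Hm _ Hy). lra.
  - exists (- x0). rewrite Ropp_involutive. exact Hx0.
  - exists (- M). split.
    + intros x Hx. enough (- x <= M) by lra. apply HM1. rewrite Ropp_involutive. exact Hx.
    + intros c Hc. enough (M <= - c) by lra. apply HM2. intros y Hy. pose proof (Hc _ Hy). lra.
Qed.

Lemma is_glb_approx (E : R -> Prop) (S e : R) :
  is_glb E S -> 0 < e -> exists x, E x /\ x < S + e.
Proof.
  intros [_ HS] He. apply NNPP. intros Hno.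
  enough (S + e <= S) by lra.
  apply HS. intros x Hx. apply Rnot_lt_le. intros Hlt. apply Hno. exists x. auto.
Qed.

Section ConvexFunction.

Variables (a b : R) (f : R -> R).
Hypothesis Hf : convex_on a b f.

Lemma convex_on_chord x y z : a <= x -> x < y -> y < z -> z <= b ->
  (z - x) * f y <= (z - y) * f x + (y - x) * f z.
Proof.
  intros Hax Hxy Hyz Hzb.
  set (t := (z - y) / (z - x)).
  assert (Ht : 0 <= t <= 1).
  { unfold t; split.
    - apply Rdiv_le_0_compat; lra.
    - apply Rmult_le_reg_r with (z - x); [lra|].
      unfold Rdiv. rewrite Rmult_assoc, Rinv_l; lra. }
  pose proof (Hf x z t ltac:(lra) ltac:(lra) Ht) as Hc.
  replace (t * x + (1 - t) * z) with y in Hc by (unfold t; field; lra).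
  apply Rmult_le_compat_l with (r := z - x) in Hc; [|lra].
  replace ((z - x) * (t * f x + (1 - t) * f z)) with ((z - y) * f x + (y - x) * f z)
    in Hc by (unfold t; field; lra).
  exact Hc.
Qed.

Lemma convex_slope_nondecreasing c x y : a <= x -> x < y -> y < c -> c <= b ->
  (f c - f x) / (c - x) <= (f c - f y) / (c - y).
Proof.
  intros Hx Hxy Hyc Hc.
  pose proof (convex_on_chord x y c Hx Hxy Hyc Hc).
  apply Rmult_le_reg_r with ((c - x) * (c - y)); [nra|].
  replace ((f c - f x) / (c - x) * ((c - x) * (c - y))) with ((f c - f x) * (c - y))
    by (field; lra).
  replace ((f c - f y) / (c - y) * ((c - x) * (c - y))) with ((f c - f y) * (c - x))
    by (field; lra).
  nra.
Qed.

(* With s the slope towards c, f x = f c - s x (c - x), and s decreases to its infimum as x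
   decreases to a. *)
Lemma convex_right_limit :
  a < b -> exists L, forall eps, 0 < eps -> exists del, 0 < del /\
    forall x, a < x < a + del -> Rabs (f x - L) < eps.
Proof.
  intros Hab.
  set (c := (a + b) / 2).
  set (s := fun x => (f c - f x) / (c - x)).
  assert (Hs : forall x y, a <= x -> x < y -> y < c -> s x <= s y)
    by (intros; apply convex_slope_nondecreasing; unfold c in *; lra).
  set (E := fun v => exists x, a < x < c /\ v = s x).
  destruct (is_glb_exists E) as [S HS].
  { exists (s ((a + c) / 2)), ((a + c) / 2). split; [unfold c; lra | reflexivity]. }
  { exists (s a). intros v [x [Hx ->]]. apply Hs; lra. }
  exists (f c - S * (c - a)). intros eps Heps.
  destruct (is_glb_approx E S (eps / (2 * (c - a))) HS) as [v1 [[x1 [Hx1 ->]] Hv1]].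
  { apply Rdiv_lt_0_compat; unfold c; lra. }
  set (K := Rabs S + 1).
  assert (HK : 0 < K) by (unfold K; pose proof (Rabs_pos S); lra).
  exists (Rmin (x1 - a) (eps / (2 * K))). split.
  { apply Rmin_pos; [lra|]. apply Rdiv_lt_0_compat; lra. }
  intros x Hx.
  pose proof (Rmin_l (x1 - a) (eps / (2 * K))). pose proof (Rmin_r (x1 - a) (eps / (2 * K))).
  assert (HSx : S <= s x) by (apply (proj1 HS); exists x; split; [lra | reflexivity]).
  assert (Hsx : s x <= s x1) by (apply Hs; lra).
  replace (f x - (f c - S * (c - a))) with ((S - s x) * (c - x) + S * (x - a))
    by (unfold s; field; lra).
  eapply Rle_lt_trans; [apply Rabs_triang|]. rewrite !Rabs_mult.
  rewrite (Rabs_left1 (S - s x)), (Rabs_right (c - x)), (Rabs_right (x - a)) by lra.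
  assert (- (S - s x) * (c - x) <= eps / (2 * (c - a)) * (c - a))
    by (apply Rmult_le_compat; lra).
  assert (Rabs S * (x - a) <= K * (x - a)) by (apply Rmult_le_compat_r; unfold K; lra).
  assert (K * (x - a) < K * (eps / (2 * K)))
    by (apply Rmult_lt_compat_l; lra).
  replace (eps / (2 * (c - a)) * (c - a)) with (eps / 2) in * by (field; lra).
  replace (K * (eps / (2 * K))) with (eps / 2) in * by (field; lra).
  lra.
Qed.

Lemma convex_locally_lipschitz x0 : a < x0 < b ->
  exists K d, 0 <= K /\ 0 < d /\ forall x, Rabs (x - x0) < d ->
    Rabs (f x - f x0) <= K * Rabs (x - x0).
Proof.
  intros Hx0.
  set (p := (a + x0) / 2). set (q := (x0 + b) / 2).
  set (S1 := (f q - f x0) / (q - x0)). set (S2 := (f x0 - f p) / (x0 - p)).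
  assert (E1 : (q - x0) * S1 = f q - f x0) by (unfold S1, q; field; lra).
  assert (E2 : (x0 - p) * S2 = f x0 - f p) by (unfold S2, p; field; lra).
  exists (Rabs S1 + Rabs S2), (Rmin (x0 - p) (q - x0)).
  split; [pose proof (Rabs_pos S1); pose proof (Rabs_pos S2); lra|].
  split; [apply Rmin_pos; unfold p, q; lra|].
  intros x Hx. apply Rabs_def2 in Hx.
  pose proof (Rmin_l (x0 - p) (q - x0)). pose proof (Rmin_r (x0 - p) (q - x0)).
  assert (Hp : a < p < x0) by (unfold p; lra). assert (Hq : x0 < q < b) by (unfold q; lra).
  assert (Hbetween : (x - x0) * S1 <= f x - f x0 <= (x - x0) * S2 \/
                     (x - x0) * S2 <= f x - f x0 <= (x - x0) * S1).
  { destruct (Rtotal_order x x0) as [Hlt | [-> | Hgt]].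
    - pose proof (convex_on_chord p x x0 ltac:(lra) ltac:(lra) ltac:(lra) ltac:(lra)).
      pose proof (convex_on_chord x x0 q ltac:(lra) ltac:(lra) ltac:(lra) ltac:(lra)).
      left; split.
      + apply Rmult_le_reg_l with (q - x0); nra.
      + apply Rmult_le_reg_l with (x0 - p); nra.
    - left; lra.
    - pose proof (convex_on_chord x0 x q ltac:(lra) ltac:(lra) ltac:(lra) ltac:(lra)).
      pose proof (convex_on_chord p x0 x ltac:(lra) ltac:(lra) ltac:(lra) ltac:(lra)).
      right; split.
      + apply Rmult_le_reg_l with (x0 - p); nra.
      + apply Rmult_le_reg_l with (q - x0); nra. }
  replace ((Rabs S1 + Rabs S2) * Rabs (x - x0))
    with (Rabs ((x - x0) * S1) + Rabs ((x - x0) * S2)) by (rewrite !Rabs_mult; ring).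
  revert Hbetween. generalize ((x - x0) * S1) ((x - x0) * S2) (f x - f x0).
  intros u v w. unfold Rabs. destruct (Rcase_abs u), (Rcase_abs v), (Rcase_abs w); lra.
Qed.

Lemma convex_continuous_interior x0 : a < x0 < b -> continuous f x0.
Proof.
  intros Hx0. apply continuity_pt_filterlim.
  destruct (convex_locally_lipschitz x0 Hx0) as [K [d [HK [Hd Hlip]]]].
  intros eps Heps. exists (Rmin d (eps / (K + 1))). split.
  { apply Rmin_pos; [lra|]. apply Rdiv_lt_0_compat; lra. }
  intros x [_ Hx]. simpl in *. unfold R_dist in *.
  pose proof (Rmin_l d (eps / (K + 1))). pose proof (Rmin_r d (eps / (K + 1))).
  pose proof (Rabs_pos (x - x0)).
  apply Rle_lt_trans with (K * Rabs (x - x0)); [apply Hlip; lra|].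
  apply Rle_lt_trans with ((K + 1) * Rabs (x - x0)); [nra|].
  apply Rlt_le_trans with ((K + 1) * (eps / (K + 1))).
  - apply Rmult_lt_compat_l; lra.
  - right; field; lra.
Qed.

End ConvexFunction.

Lemma ex_RInt_comp_reflect (g : R -> R) (s c d : R) :
  ex_RInt g (s - c) (s - d) -> ex_RInt (fun y => g (s - y)) c d.
Proof.
  intros Hg.
  assert (Hlin : ex_RInt g (-1 * c + s) (-1 * d + s))
    by (replace (-1 * c + s) with (s - c) by ring; replace (-1 * d + s) with (s - d) by ring;
        exact Hg).
  pose proof (ex_RInt_comp_lin g (-1) s c d Hlin) as H.
  apply (ex_RInt_scal _ _ _ (-1)) in H.
  apply (ex_RInt_ext _ _ c d) with (2 := H).
  intros x _. change (-1 * (-1 * g (-1 * x + s)) = g (s - x)).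
  replace (-1 * x + s) with (s - x) by ring. ring.
Qed.

(* Redefining g at a as its right limit makes it continuous on [a, c] without changing it on
   (a, c), which is all that ex_RInt depends on. *)
Lemma ex_RInt_of_right_limit (g : R -> R) (a c L : R) :
  a < c -> (forall z, a < z <= c -> continuous g z) ->
  (forall eps, 0 < eps -> exists del, 0 < del /\
     forall x, a < x < a + del -> Rabs (g x - L) < eps) ->
  ex_RInt g a c.
Proof.
  intros Hac Hcont Hlim.
  set (g' := fun x => if Rle_dec x a then L else g x).
  apply (ex_RInt_ext g').
  { intros x Hx. rewrite Rmin_left, Rmax_right in Hx by lra.
    unfold g'. destruct (Rle_dec x a); [lra | reflexivity]. }
  apply (ex_RInt_continuous (V := R_CompleteNormedModule)). intros z Hz.
  rewrite Rmin_left, Rmax_right in Hz by lra.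
  destruct (Req_dec z a) as [-> | Hza].
  - apply continuity_pt_filterlim. intros eps Heps.
    destruct (Hlim eps Heps) as [del [Hdel Hclose]].
    exists del. split; [exact Hdel|]. intros x [_ Hx]. simpl in *. unfold R_dist in *.
    apply Rabs_def2 in Hx. unfold g'. destruct (Rle_dec a a) as [_ | ?]; [|lra].
    destruct (Rle_dec x a).
    + rewrite Rminus_diag, Rabs_R0. exact Heps.
    + apply Hclose. lra.
  - apply (continuous_ext_loc g' g).
    + apply (filter_imp (fun y => a < y)).
      * intros y Hy. unfold g'. destruct (Rle_dec y a); [lra | reflexivity].
      * apply open_gt. lra.
    + apply Hcont. lra.
Qed.

Lemma ex_RInt_convex (a b : R) (f : R -> R) c d :
  a < b -> convex_on a b f -> a <= c <= b -> a <= d <= b -> ex_RInt f c d.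
Proof.
  intros Hab Hf Hc Hd.
  set (m := (a + b) / 2).
  assert (Hleft : forall g, convex_on a b g -> ex_RInt g a m).
  { intros g Hg. destruct (convex_right_limit a b g Hg Hab) as [L HL].
    apply (ex_RInt_of_right_limit g a m L); [unfold m; lra | | exact HL].
    intros z Hz. apply (convex_continuous_interior a b); auto. unfold m in Hz; lra. }
  assert (Hright : ex_RInt f m b).
  { apply ex_RInt_swap.
    apply (ex_RInt_ext (fun y => f (a + b - (a + b - y)))).
    { intros y _. f_equal. ring. }
    apply (ex_RInt_comp_reflect (fun x => f (a + b - x))).
    replace (a + b - b) with a by ring. replace (a + b - m) with m by (unfold m; field).
    apply Hleft, convex_on_reflect, Hf. }
  assert (Hall : ex_RInt f a b) by (apply ex_RInt_Chasles with m; auto).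
  assert (Hsub : forall c d, a <= c <= d -> d <= b -> ex_RInt f c d).
  { intros c' d' Hc' Hd'. apply (ex_RInt_Chasles_2 f a); [lra|].
    apply (ex_RInt_Chasles_1 f a d' b); [lra | exact Hall]. }
  destruct (Rle_dec c d); [apply Hsub | apply ex_RInt_swap, Hsub]; lra.
Qed.

(* Coquelicot states these over an abstract normed module, so they do not rewrite terms
   written with Rplus and Rmult. *)
Lemma RInt_plus_R (g h : R -> R) (c d : R) : ex_RInt g c d -> ex_RInt h c d ->
  RInt (fun x => g x + h x) c d = RInt g c d + RInt h c d.
Proof. exact (RInt_plus g h c d). Qed.

Lemma RInt_scal_R (g : R -> R) (c d k : R) : ex_RInt g c d ->
  RInt (fun x => k * g x) c d = k * RInt g c d.
Proof. exact (RInt_scal g c d k). Qed.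

Lemma RInt_const_R (c d v : R) : RInt (fun _ => v) c d = (d - c) * v.
Proof. exact (RInt_const c d v). Qed.

Lemma RInt_Chasles_R (g : R -> R) (c d e : R) : ex_RInt g c d -> ex_RInt g d e ->
  RInt g c d + RInt g d e = RInt g c e.
Proof. exact (RInt_Chasles g c d e). Qed.

Lemma RInt_comp_reflect (g : R -> R) (c d : R) :
  ex_RInt g c d -> RInt (fun y => g (c + d - y)) c d = RInt g c d.
Proof.
  intros Hg.
  assert (Hrefl : ex_RInt (fun y => g (c + d - y)) c d).
  { apply ex_RInt_comp_reflect. replace (c + d - c) with d by ring.
    replace (c + d - d) with c by ring. apply ex_RInt_swap, Hg. }
  assert (Hlin : ex_RInt g (-1 * c + (c + d)) (-1 * d + (c + d))).
  { replace (-1 * c + (c + d)) with d by ring. replace (-1 * d + (c + d)) with c by ring.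
    apply ex_RInt_swap, Hg. }
  pose proof (RInt_comp_lin g (-1) (c + d) c d Hlin) as Hsub.
  replace (-1 * c + (c + d)) with d in Hsub by ring.
  replace (-1 * d + (c + d)) with c in Hsub by ring.
  rewrite <- (opp_RInt_swap g c d Hg) in Hsub.
  change (RInt (fun y => -1 * g (-1 * y + (c + d))) c d = - RInt g c d) in Hsub.
  rewrite (RInt_ext _ (fun y => -1 * g (c + d - y))) in Hsub
    by (intros y _; f_equal; f_equal; ring).
  rewrite RInt_scal_R in Hsub by exact Hrefl. lra.
Qed.

Lemma RInt_comp_midpoint_map (g : R -> R) (y c d : R) :
  ex_RInt g ((y + c) / 2) ((y + d) / 2) ->
  RInt (fun u => g ((y + u) / 2)) c d = 2 * RInt g ((y + c) / 2) ((y + d) / 2).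
Proof.
  intros Hg.
  assert (Hlin : ex_RInt g (/ 2 * c + y / 2) (/ 2 * d + y / 2)).
  { replace (/ 2 * c + y / 2) with ((y + c) / 2) by field.
    replace (/ 2 * d + y / 2) with ((y + d) / 2) by field. exact Hg. }
  pose proof (RInt_comp_lin g (/ 2) (y / 2) c d Hlin) as Hsub.
  assert (Hex : ex_RInt (fun u => g (/ 2 * u + y / 2)) c d).
  { apply (ex_RInt_ext (fun u => 2 * (/ 2 * g (/ 2 * u + y / 2)))).
    { intros x _. rewrite <- Rmult_assoc, Rinv_r, Rmult_1_l by lra. reflexivity. }
    apply (ex_RInt_scal (V := R_NormedModule)), (ex_RInt_comp_lin g (/ 2) (y / 2) c d Hlin). }
  change (RInt (fun u => / 2 * g (/ 2 * u + y / 2)) c d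
          = RInt g (/ 2 * c + y / 2) (/ 2 * d + y / 2)) in Hsub.
  rewrite RInt_scal_R in Hsub by exact Hex.
  replace (/ 2 * c + y / 2) with ((y + c) / 2) in Hsub by field.
  replace (/ 2 * d + y / 2) with ((y + d) / 2) in Hsub by field.
  rewrite <- Hsub, (RInt_ext _ (fun u => g (/ 2 * u + y / 2))) by (intros; f_equal; field).
  rewrite <- Rmult_assoc, Rinv_r, Rmult_1_l by lra. reflexivity.
Qed.

Lemma convex_on_RInt (G : R -> R -> R) (lo hi c d : R) :
  c <= d -> (forall t, lo <= t <= hi -> ex_RInt (G t) c d) ->
  (forall u, c <= u <= d -> convex_on lo hi (fun t => G t u)) ->
  convex_on lo hi (fun t => RInt (G t) c d).
Proof.
  intros Hcd Hex Hconv s t l Hs Ht Hl.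
  assert (Hst : lo <= l * s + (1 - l) * t <= hi) by (apply convex_combination_between; lra).
  rewrite <- !(RInt_scal_R (G _)), <- RInt_plus_R
    by (auto; apply (ex_RInt_scal (V := R_NormedModule)); auto).
  apply RInt_le; auto.
  - apply (ex_RInt_plus (V := R_NormedModule)); apply (ex_RInt_scal (V := R_NormedModule)); auto.
  - intros u Hu. apply Hconv; auto; lra.
Qed.

(* Left Hermite-Hadamard inequality: pair u with its mirror image c + d - u. *)
Lemma RInt_ge_midpoint_convex (g : R -> R) (c d : R) :
  c < d -> convex_on c d g -> (d - c) * g ((c + d) / 2) <= RInt g c d.
Proof.
  intros Hcd Hg.
  assert (Hex : ex_RInt g c d) by (apply (ex_RInt_convex c d); auto; lra).
  assert (Hrefl : ex_RInt (fun u => g (c + d - u)) c d).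
  { apply ex_RInt_comp_reflect. replace (c + d - c) with d by ring.
    replace (c + d - d) with c by ring. apply ex_RInt_swap, Hex. }
  assert (Hpair : forall u, c < u < d -> 2 * g ((c + d) / 2) <= g u + g (c + d - u)).
  { intros u Hu.
    pose proof (Hg u (c + d - u) (/ 2) ltac:(lra) ltac:(lra) ltac:(lra)) as H.
    replace (/ 2 * u + (1 - / 2) * (c + d - u)) with ((c + d) / 2) in H by field. lra. }
  assert (H2 : RInt (fun _ => 2 * g ((c + d) / 2)) c d
               <= RInt (fun u => g u + g (c + d - u)) c d).
  { apply RInt_le; [lra | apply ex_RInt_const | | exact Hpair].
    apply (ex_RInt_plus (V := R_NormedModule)); auto. }
  rewrite RInt_const_R, RInt_plus_R, RInt_comp_reflect in H2 by auto. lra.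
Qed.

(* [Hcell f xl xr] and [Fcell f xl xr] are h H_j and 2 h F_j for the cell [xl, xr]. *)
Definition Hcell (f : R -> R) (xl xr t : R) : R :=
  RInt (fun u => f (t * u + (1 - t) * ((xl + xr) / 2))) xl xr.

Definition Fcell (f : R -> R) (xl xr t : R) : R :=
  RInt (fun u => f ((1 + t) / 2 * xl + (1 - t) / 2 * u)
                 + f ((1 + t) / 2 * xr + (1 - t) / 2 * u)) xl xr.

Section Cell.

Variables (f : R -> R) (xl xr : R).
Hypothesis Hlt : xl < xr.
Hypothesis Hf : convex_on xl xr f.

Lemma ex_RInt_cell_convex_combination (l y : R) : 0 <= l <= 1 -> xl <= y <= xr ->
  ex_RInt (fun u => f (l * y + (1 - l) * u)) xl xr.
Proof.
  intros Hl Hy. destruct (Req_dec l 1) as [-> | Hl1].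
  - apply (ex_RInt_ext (fun _ => f y)); [intros; f_equal; ring | apply ex_RInt_const].
  - assert (Hlin : ex_RInt f ((1 - l) * xl + l * y) ((1 - l) * xr + l * y)).
    { apply (ex_RInt_convex xl xr); auto; split; nra. }
    apply (ex_RInt_comp_lin f (1 - l) (l * y)) in Hlin.
    apply (ex_RInt_scal (V := R_NormedModule) _ _ _ (/ (1 - l))) in Hlin.
    apply (ex_RInt_ext _ _ xl xr) with (2 := Hlin). intros u _.
    change (/ (1 - l) * ((1 - l) * f ((1 - l) * u + l * y)) = f (l * y + (1 - l) * u)).
    rewrite <- Rmult_assoc, Rinv_l, Rmult_1_l by lra. f_equal. ring.
Qed.

Lemma Hcell_convex : convex_on 0 1 (Hcell f xl xr).
Proof.
  set (m := (xl + xr) / 2).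
  apply (convex_on_RInt (fun t u => f (t * u + (1 - t) * m))); [lra | |].
  - intros t Ht. apply (ex_RInt_ext (fun u => f ((1 - t) * m + (1 - (1 - t)) * u))).
    + intros u _. f_equal. ring.
    + apply ex_RInt_cell_convex_combination; unfold m; lra.
  - intros u Hu. apply (convex_on_ext _ _ (fun t => f ((u - m) * t + m))).
    + intros t. f_equal. ring.
    + apply (convex_on_comp_affine xl xr); auto. intros t Ht.
      replace ((u - m) * t + m) with (t * u + (1 - t) * m) by ring.
      apply convex_combination_between; unfold m; lra.
Qed.

Lemma Hcell_at_0 : Hcell f xl xr 0 = (xr - xl) * f ((xl + xr) / 2).
Proof.
  unfold Hcell. rewrite <- (RInt_const_R xl xr). apply RInt_ext. intros u _. f_equal. ring.
Qed.

Lemma Hcell_at_1 : Hcell f xl xr 1 = RInt f xl xr.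
Proof. apply RInt_ext. intros u _. f_equal. ring. Qed.

Lemma Hcell_ge_at_0 (t : R) : 0 <= t <= 1 -> Hcell f xl xr 0 <= Hcell f xl xr t.
Proof.
  intros Ht. rewrite Hcell_at_0. unfold Hcell. set (m := (xl + xr) / 2).
  pose proof (RInt_ge_midpoint_convex (fun u => f (t * u + (1 - t) * m)) xl xr Hlt) as H.
  cbv beta in H. replace (t * ((xl + xr) / 2) + (1 - t) * m) with m in H by (unfold m; ring).
  apply H, (convex_on_comp_affine xl xr); auto. intros u Hu.
  apply convex_combination_between; unfold m; lra.
Qed.

Lemma Fcell_convex : convex_on (-1) 1 (Fcell f xl xr).
Proof.
  assert (Hend : forall y, xl <= y <= xr -> forall u, xl <= u <= xr ->
            convex_on (-1) 1 (fun t => f ((1 + t) / 2 * y + (1 - t) / 2 * u))).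
  { intros y Hy u Hu. apply (convex_on_ext _ _ (fun t => f ((y - u) / 2 * t + (y + u) / 2))).
    - intros t. f_equal. field.
    - apply (convex_on_comp_affine xl xr); auto. intros t Ht.
      replace ((y - u) / 2 * t + (y + u) / 2) with ((1 + t) / 2 * y + (1 - (1 + t) / 2) * u)
        by field.
      apply convex_combination_between; lra. }
  assert (Hex : forall y, xl <= y <= xr -> forall t, -1 <= t <= 1 ->
            ex_RInt (fun u => f ((1 + t) / 2 * y + (1 - t) / 2 * u)) xl xr).
  { intros y Hy t Ht.
    apply (ex_RInt_ext (fun u => f ((1 + t) / 2 * y + (1 - (1 + t) / 2) * u))).
    - intros u _. f_equal. field.
    - apply ex_RInt_cell_convex_combination; lra. }
  apply convex_on_RInt; [lra | |].
  - intros t Ht. apply (ex_RInt_plus (V := R_NormedModule)); apply Hex; lra.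
  - intros u Hu. apply convex_on_plus; apply Hend; lra.
Qed.

Lemma Fcell_at_m1 : Fcell f xl xr (-1) = 2 * RInt f xl xr.
Proof.
  unfold Fcell. rewrite <- RInt_scal_R by (apply (ex_RInt_convex xl xr); auto; lra).
  apply RInt_ext. intros u _.
  replace ((1 + -1) / 2 * xl + (1 - -1) / 2 * u) with u by field.
  replace ((1 + -1) / 2 * xr + (1 - -1) / 2 * u) with u by field.
  change (f u + f u = 2 * f u). ring.
Qed.

Lemma Fcell_at_1 : Fcell f xl xr 1 = (xr - xl) * (f xl + f xr).
Proof.
  unfold Fcell. rewrite <- (RInt_const_R xl xr). apply RInt_ext. intros u _.
  replace ((1 + 1) / 2 * xl + (1 - 1) / 2 * u) with xl by field.
  replace ((1 + 1) / 2 * xr + (1 - 1) / 2 * u) with xr by field.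
  reflexivity.
Qed.

(* Substituting v = (y + u) / 2 maps the cell onto its half next to y. *)
Lemma Fcell_at_0 : Fcell f xl xr 0 = 2 * RInt f xl xr.
Proof.
  set (m := (xl + xr) / 2).
  assert (Hex : forall c d, xl <= c <= xr -> xl <= d <= xr -> ex_RInt f c d)
    by (intros; apply (ex_RInt_convex xl xr); auto).
  assert (Hhalf : forall y, xl <= y <= xr -> ex_RInt (fun u => f ((y + u) / 2)) xl xr).
  { intros y Hy. apply (ex_RInt_ext (fun u => f (/ 2 * y + (1 - / 2) * u))).
    - intros u _. f_equal. field.
    - apply ex_RInt_cell_convex_combination; lra. }
  unfold Fcell.
  rewrite (RInt_ext _ (fun u => f ((xl + u) / 2) + f ((xr + u) / 2)))
    by (intros u _; f_equal; f_equal; field).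
  rewrite RInt_plus_R, !RInt_comp_midpoint_map by (apply Hhalf || apply Hex; lra).
  replace ((xl + xl) / 2) with xl by field. replace ((xr + xr) / 2) with xr by field.
  replace ((xr + xl) / 2) with m by (unfold m; field). fold m.
  rewrite <- (RInt_Chasles_R f xl m xr) by (apply Hex; unfold m; lra).
  symmetry. apply Rmult_plus_distr_l.
Qed.

End Cell.

Lemma sum_n_m_ext_loc_R (u v : nat -> R) (n m : nat) :
  (forall k, (n <= k <= m)%nat -> u k = v k) -> sum_n_m u n m = sum_n_m v n m :> R.
Proof. exact (sum_n_m_ext_loc u v n m). Qed.

Lemma sum_n_m_le_loc (u v : nat -> R) (n m : nat) :
  (forall k, (n <= k <= m)%nat -> u k <= v k) -> sum_n_m u n m <= sum_n_m v n m.
Proof.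
  intros Huv.
  rewrite (sum_n_m_ext_loc_R u (fun k => Rmin (u k) (v k))).
  - apply sum_n_m_le. intros k. apply Rmin_r.
  - intros k Hk. rewrite Rmin_left; auto.
Qed.

Lemma sum_n_m_Rmult_l (c : R) (u : nat -> R) (n m : nat) :
  sum_n_m (fun k => c * u k) n m = c * sum_n_m u n m.
Proof. exact (sum_n_m_mult_l (K := R_Ring) c u n m). Qed.

Lemma sum_n_m_plus_R (u v : nat -> R) (n m : nat) :
  sum_n_m (fun k => u k + v k) n m = sum_n_m u n m + sum_n_m v n m.
Proof. exact (sum_n_m_plus (G := R_AbelianMonoid) u v n m). Qed.

Lemma convex_on_sum (G : nat -> R -> R) (lo hi : R) (n m : nat) :
  (forall j, (n <= j <= m)%nat -> convex_on lo hi (G j)) ->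
  convex_on lo hi (fun t => sum_n_m (fun j => G j t) n m).
Proof.
  intros HG s t l Hs Ht Hl.
  rewrite <- !sum_n_m_Rmult_l, <- sum_n_m_plus_R.
  apply sum_n_m_le_loc. intros j Hj. apply HG; auto.
Qed.

Lemma sum_n_m_RInt_Chasles (g : R -> R) (x : nat -> R) (k : nat) :
  (forall j, (1 <= j <= k)%nat -> ex_RInt g (x (j - 1)%nat) (x j)) ->
  sum_n_m (fun j => RInt g (x (j - 1)%nat) (x j)) 1 k = RInt g (x O) (x k).
Proof.
  intros Hcells.
  enough (ex_RInt g (x O) (x k) /\
          sum_n_m (fun j => RInt g (x (j - 1)%nat) (x j)) 1 k = RInt g (x O) (x k))
    by tauto.
  induction k as [|k IH].
  - rewrite sum_n_m_zero, RInt_point by lia. split; [apply ex_RInt_point | reflexivity].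
  - destruct IH as [Hex Hsum]; [intros j Hj; apply Hcells; lia|].
    assert (Hlast : ex_RInt g (x k) (x (S k))).
    { replace k with (S k - 1)%nat at 1 by lia. apply Hcells. lia. }
    rewrite sum_n_Sm, Hsum by lia. replace (S k - 1)%nat with k by lia.
    split; [apply (ex_RInt_Chasles _ _ (x k)); auto |].
    apply RInt_Chasles; auto.
Qed.

Lemma sum_n_m_trapezoid (phi : nat -> R) (p : nat) :
  sum_n_m (fun j => (phi (j - 1)%nat + phi j) / 2) 1 (S p)
  = / 2 * (phi O + 2 * sum_n_m phi 1 p + phi (S p)) :> R.
Proof.
  induction p as [|p IH].
  - rewrite sum_n_n, sum_n_m_zero by lia. simpl. change (zero : R) with 0. field.
  - rewrite sum_n_Sm, IH, (sum_n_Sm phi 1 p) by lia.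
    replace (S (S p) - 1)%nat with (S p) by lia.
    change (plus ?u ?v) with (u + v). field.
Qed.

Lemma convex_nondecreasing_of_ge_at_0 (g : R -> R) :
  convex_on 0 1 g -> (forall t, 0 <= t <= 1 -> g 0 <= g t) -> nondecreasing_on 0 1 g.
Proof.
  intros Hg Hmin s t Hs Hst Ht.
  destruct (Req_dec t 0) as [Ht0 | Ht0]; [replace s with t by lra; lra|].
  set (l := s / t).
  assert (Hl : 0 <= l <= 1).
  { unfold l. split; [apply Rdiv_le_0_compat; lra|].
    apply Rmult_le_reg_r with t; [lra|]. unfold Rdiv. rewrite Rmult_assoc, Rinv_l; lra. }
  pose proof (Hg t 0 l ltac:(lra) ltac:(lra) Hl) as Hc.
  replace (l * t + (1 - l) * 0) with s in Hc by (unfold l; field; lra).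
  pose proof (Hmin t ltac:(lra)). nra.
Qed.

(* 0 lies between -1 and t, so g 0 is at most a convex combination of g (-1) = g 0 and g t. *)
Lemma convex_ge_at_0_of_eq_at_m1 (g : R -> R) :
  convex_on (-1) 1 g -> g (-1) = g 0 -> forall t, 0 <= t <= 1 -> g 0 <= g t.
Proof.
  intros Hg Heq t Ht.
  set (l := t / (1 + t)).
  assert (Hl : 0 <= l <= 1).
  { unfold l. split; [apply Rdiv_le_0_compat; lra|].
    apply Rmult_le_reg_r with (1 + t); [lra|]. unfold Rdiv. rewrite Rmult_assoc, Rinv_l; lra. }
  pose proof (Hg (-1) t l ltac:(lra) ltac:(lra) Hl) as Hc.
  replace (l * -1 + (1 - l) * t) with 0 in Hc by (unfold l; field; lra).
  assert (Hpos : 0 < 1 - l).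
  { replace (1 - l) with (/ (1 + t)) by (unfold l; field; lra). apply Rinv_0_lt_compat; lra. }
  rewrite Heq in Hc. nra.
Qed.

Lemma nondecreasing_image01_bounds (g : R -> R) :
  nondecreasing_on 0 1 g -> is_lub (image01 g) (g 1) /\ is_glb (image01 g) (g 0).
Proof.
  intros Hg. split; split.
  - intros y [t [Ht ->]]. apply Hg; lra.
  - intros c Hc. apply Hc. exists 1. split; [lra | reflexivity].
  - intros y [t [Ht ->]]. apply Hg; lra.
  - intros c Hc. apply Hc. exists 0. split; [lra | reflexivity].
Qed.

Section Grid.

Variables (a b : R) (n : nat) (f : R -> R).
Hypothesis Hab : a < b.
Hypothesis Hn : (1 <= n)%nat.
Hypothesis Hf : convex_on a b f.

Let h := (b - a) / INR n.
Let x := node a b n.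

Lemma step_pos : 0 < h.
Proof. apply Rdiv_lt_0_compat; [lra | apply lt_0_INR; lia]. Qed.

Lemma node_first : x O = a.
Proof. unfold x, node. simpl. ring. Qed.

Lemma node_last : x n = b.
Proof. assert (0 < INR n) by (apply lt_0_INR; lia). unfold x, node. field. lra. Qed.

Lemma node_cell (j : nat) : (1 <= j <= n)%nat ->
  a <= x (j - 1)%nat /\ x j <= b /\ x j - x (j - 1)%nat = h.
Proof.
  intros Hj.
  assert (0 < INR n) by (apply lt_0_INR; lia).
  assert (1 <= INR j <= INR n) by (split; [apply (le_INR 1) | apply le_INR]; lia).
  assert (Hstep : INR n * h = b - a) by (unfold h; field; lra).
  pose proof step_pos.
  unfold x, node. rewrite minus_INR by lia. simpl. fold h. repeat split; nra.
Qed.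

Lemma cell_lt_and_convex (j : nat) : (1 <= j <= n)%nat -> x (j - 1)%nat < x j /\
  convex_on (x (j - 1)%nat) (x j) f.
Proof.
  intros Hj. destruct (node_cell j Hj) as [Hl [Hr Hstep]]. pose proof step_pos.
  split; [lra|]. apply (convex_on_sub a b); auto.
Qed.

Lemma Hsum_cells (t : R) :
  Hsum f a b n t = sum_n_m (fun j => / h * Hcell f (x (j - 1)%nat) (x j) t) 1 n.
Proof. reflexivity. Qed.

Lemma Fsum_cells (t : R) :
  Fsum f a b n t = sum_n_m (fun j => / (2 * h) * Fcell f (x (j - 1)%nat) (x j) t) 1 n.
Proof. reflexivity. Qed.

Lemma Hsum_convex : convex_on 0 1 (Hsum f a b n).
Proof.
  apply convex_on_sum. intros j Hj. destruct (cell_lt_and_convex j Hj).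
  apply convex_on_scal; [left; apply Rinv_0_lt_compat, step_pos | apply Hcell_convex; auto].
Qed.

Lemma Fsum_convex : convex_on (-1) 1 (Fsum f a b n).
Proof.
  apply convex_on_sum. intros j Hj. destruct (cell_lt_and_convex j Hj).
  apply convex_on_scal; [| apply Fcell_convex; auto].
  left. apply Rinv_0_lt_compat, Rmult_lt_0_compat; [lra | apply step_pos].
Qed.

Lemma Hsum_ge_at_0 (t : R) : 0 <= t <= 1 -> Hsum f a b n 0 <= Hsum f a b n t.
Proof.
  intros Ht. rewrite !Hsum_cells. apply sum_n_m_le_loc. intros j Hj.
  destruct (cell_lt_and_convex j Hj). apply Rmult_le_compat_l.
  - left. apply Rinv_0_lt_compat, step_pos.
  - apply Hcell_ge_at_0; auto.
Qed.

Lemma Fsum_at_m1 : Fsum f a b n (-1) = Fsum f a b n 0.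
Proof.
  rewrite !Fsum_cells. apply sum_n_m_ext_loc_R. intros j Hj.
  destruct (cell_lt_and_convex j Hj). rewrite Fcell_at_m1, Fcell_at_0 by auto. reflexivity.
Qed.

Lemma Hsum_at_1 : Hsum f a b n 1 = / h * RInt f a b.
Proof.
  rewrite Hsum_cells, (sum_n_m_ext_loc_R _ (fun j => / h * RInt f (x (j - 1)%nat) (x j))).
  - rewrite sum_n_m_Rmult_l, sum_n_m_RInt_Chasles, node_first, node_last; [reflexivity|].
    intros j Hj. destruct (node_cell j Hj) as [Hl [Hr _]].
    destruct (cell_lt_and_convex j Hj). apply (ex_RInt_convex a b); auto; lra.
  - intros j Hj. rewrite Hcell_at_1. reflexivity.
Qed.

Lemma Fsum_at_0 : Fsum f a b n 0 = / h * RInt f a b.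
Proof.
  rewrite <- Hsum_at_1, Fsum_cells, Hsum_cells. apply sum_n_m_ext_loc_R. intros j Hj.
  destruct (cell_lt_and_convex j Hj). pose proof step_pos.
  rewrite Fcell_at_0, Hcell_at_1 by auto. field. lra.
Qed.

Lemma Hsum_at_0 : Hsum f a b n 0 = sum_n_m (fun k => f ((x (k - 1)%nat + x k) / 2)) 1 n.
Proof.
  rewrite Hsum_cells. apply sum_n_m_ext_loc_R. intros j Hj.
  destruct (node_cell j Hj) as [_ [_ Hstep]]. pose proof step_pos.
  rewrite Hcell_at_0, Hstep. field. lra.
Qed.

Lemma Fsum_at_1 :
  Fsum f a b n 1 = / 2 * (f a + 2 * sum_n_m (fun k => f (x k)) 1 (n - 1) + f b).
Proof.
  rewrite Fsum_cells, (sum_n_m_ext_loc_R _ (fun j => (f (x (j - 1)%nat) + f (x j)) / 2)).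
  - pose proof (sum_n_m_trapezoid (fun k => f (x k)) (n - 1)) as Htrap.
    replace (S (n - 1)) with n in Htrap by lia.
    rewrite Htrap, node_first, node_last. reflexivity.
  - intros j Hj. destruct (node_cell j Hj) as [_ [_ Hstep]]. pose proof step_pos.
    rewrite Fcell_at_1, Hstep. field. lra.
Qed.

End Grid.

Theorem proposition2p4 (a b : R) (n : nat) (f : R -> R) :
  a < b -> (1 <= n)%nat -> convex_on a b f ->
  let h := (b - a) / INR n in
  let x := node a b n in
  let H := Hsum f a b n in
  let F := Fsum f a b n in
  (* (1) convexity *)
  (convex_on 0 1 H /\ convex_on 0 1 F) /\
  (* (2) monotonicity *)
  (nondecreasing_on 0 1 H /\ nondecreasing_on 0 1 F) /\
  (* (3) sup / inf *)
  (is_lub (image01 H) (/ h * RInt f a b) /\ / h * RInt f a b = H 1 /\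
   is_glb (image01 H) (sum_n_m (fun k => f ((x (k - 1)%nat + x k) / 2)) 1 n) /\
   sum_n_m (fun k => f ((x (k - 1)%nat + x k) / 2)) 1 n = H 0 /\
   is_lub (image01 F) (/ 2 * (f a + 2 * sum_n_m (fun k => f (x k)) 1 (n - 1) + f b)) /\
   / 2 * (f a + 2 * sum_n_m (fun k => f (x k)) 1 (n - 1) + f b) = F 1 /\
   is_glb (image01 F) (/ h * RInt f a b) /\ / h * RInt f a b = F 0).
Proof.
  intros Hab Hn Hf. cbv zeta.
  pose proof (Hsum_convex a b n f Hab Hn Hf) as HconvH.
  pose proof (convex_on_sub (-1) 1 0 1 _ ltac:(lra) ltac:(lra) (Fsum_convex a b n f Hab Hn Hf))
    as HconvF.
  assert (HmonH : nondecreasing_on 0 1 (Hsum f a b n))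
    by exact (convex_nondecreasing_of_ge_at_0 _ HconvH (Hsum_ge_at_0 a b n f Hab Hn Hf)).
  assert (HmonF : nondecreasing_on 0 1 (Fsum f a b n)).
  { apply (convex_nondecreasing_of_ge_at_0 _ HconvF), convex_ge_at_0_of_eq_at_m1.
    - exact (Fsum_convex a b n f Hab Hn Hf).
    - exact (Fsum_at_m1 a b n f Hab Hn Hf). }
  destruct (nondecreasing_image01_bounds _ HmonH) as [HlubH HglbH].
  destruct (nondecreasing_image01_bounds _ HmonF) as [HlubF HglbF].
  pose proof (Hsum_at_1 a b n f Hab Hn Hf) as EH1.
  pose proof (Hsum_at_0 a b n f Hab Hn) as EH0.
  pose proof (Fsum_at_1 a b n f Hab Hn) as EF1.
  pose proof (Fsum_at_0 a b n f Hab Hn Hf) as EF0.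
  rewrite EH1 in HlubH. rewrite EH0 in HglbH. rewrite EF1 in HlubF. rewrite EF0 in HglbF.
  exact (conj (conj HconvH HconvF) (conj (conj HmonH HmonF)
    (conj HlubH (conj (eq_sym EH1) (conj HglbH (conj (eq_sym EH0)
    (conj HlubF (conj (eq_sym EF1) (conj HglbF (eq_sym EF0)))))))))).
Qed.
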